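(* Let $\rho\geqslant1$ and let $S\in\mathbb{R}^{m\times n}$ be such that the event $\mathcal{E}^m_\rho$ holds, i.e. $\|C_S-I_d\|_2\leqslant\rho$. Then for every $x\in\mathbb{R}^d$, $\delta_x\leqslant(1+\rho)\,\widetilde\delta_x$. Consequently, if $S$ is drawn from a random embedding with critical sketch size $m_\delta$ (for a given $\delta\in(0,1)$) and $m\leqslant m_\delta$, then with probability at least $1-\delta$ we have $\delta_x\leqslant\widetilde\delta_x\,(1+m_\delta/m)$ for all $x\in\mathbb{R}^d$.
   Context: Let $A\in\mathbb{R}^{n\times d}$ with $n\geqslant d$, $b\in\mathbb{R}^d$, $\Lambda\in\mathbb{R}^{d\times d}$ diagonal with $\Lambda\succeq I_d$, and $\nu>0$. Set $H=A^\top A+\nu^2\Lambda$, $f(x)=\frac12 x^\top Hx-b^\top x$ and $x^*=H^{-1}b$. For $S\in\mathbb{R}^{m\times n}$ set $H_S=A^\top S^\top SA+\nu^2\Lambda$ and $C_S=H^{-1/2}H_SH^{-1/2}$. For $x\in\mathbb{R}^d$ let $\delta_x=\frac12\|x-x^*\|_H^2$ (with $\|z\|_H^2=z^\top Hz$) and $\widetilde\delta_x=\frac12\nabla f(x)^\top H_S^{-1}\nabla f(x)$. For $\rho>0$, $\mathcal{E}^m_\rho$ denotes the event $\|C_S-I_d\|_2\leqslant\max\{\sqrt\rho,\rho\}$. A random embedding is a family of distributions of random matrices $S\in\mathbb{R}^{m\times n}$, one for each $m\geqslant1$; given $\delta\in(0,1)$ its critical sketch size is $m_\delta=\inf\{k\geqslant1:\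 \mathbb{P}(\mathcal{E}^m_\rho)\geqslant1-\delta \text{ for all } \rho>0 \text{ and all } m\geqslant k/\rho\}$. *)

From HB Require Import structures.
From mathcomp Require Import all_boot all_order all_algebra.
From mathcomp Require Import all_classical all_reals all_analysis.
Set Implicit Arguments. Unset Strict Implicit. Unset Printing Implicit Defensive.
Import Order.TTheory GRing.Theory Num.Theory.
Local Open Scope classical_set_scope.
Local Open Scope ring_scope.

Section Defs.
Variable R : realType.

Definition qform (k : nat) (u : 'cV[R]_k) (M : 'M[R]_k) (v : 'cV[R]_k) : R :=
  (u^T *m M *m v) ord0 ord0.

Definition vnorm2 (k : nat) (v : 'cV[R]_k) : R :=
  Num.sqrt (\sum_i (v i ord0) ^+ 2).

Definition spec_norm (k : nat) (M : 'M[R]_k) : R :=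
  sup [set vnorm2 (M *m v) | v in [set v : 'cV[R]_k | vnorm2 v = 1]].

Definition loewner_le (k : nat) (M N : 'M[R]_k) : Prop :=
  forall v : 'cV[R]_k, qform v M v <= qform v N v.

Definition sym_psd (k : nat) (M : 'M[R]_k) : Prop :=
  M^T = M /\ forall v : 'cV[R]_k, 0 <= qform v M v.

Variables (n d : nat) (A : 'M[R]_(n, d)) (b : 'cV[R]_d)
          (Lam : 'M[R]_d) (nu : R).

Definition Hmat : 'M[R]_d := A^T *m A + nu ^+ 2 *: Lam.

Definition HS (m : nat) (S : 'M[R]_(m, n)) : 'M[R]_d :=
  A^T *m S^T *m S *m A + nu ^+ 2 *: Lam.

Definition fobj (x : 'cV[R]_d) : R := 2^-1 * qform x Hmat x - (b^T *m x) ord0 ord0.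
Definition gradf (x : 'cV[R]_d) : 'cV[R]_d := Hmat *m x - b.

Definition xstar : 'cV[R]_d := invmx Hmat *m b.

Definition delta_x (x : 'cV[R]_d) : R :=
  2^-1 * qform (x - xstar) Hmat (x - xstar).

Definition delta_tilde (m : nat) (S : 'M[R]_(m, n)) (x : 'cV[R]_d) : R :=
  2^-1 * qform (gradf x) (invmx (HS S)) (gradf x).

(* C_S = H^{-1/2} H_S H^{-1/2}, where Hmh is the matrix H^{-1/2} *)
Definition CS (Hmh : 'M[R]_d) (m : nat) (S : 'M[R]_(m, n)) : 'M[R]_d :=
  Hmh *m HS S *m Hmh.

Definition Event (Hmh : 'M[R]_d) (rho : R) (m : nat) (S : 'M[R]_(m, n)) : Prop :=
  spec_norm (CS Hmh S - 1%:M) <= Num.max (Num.sqrt rho) rho.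

(* k belongs to the set whose infimum defines the critical sketch size *)
Definition crit_ok (Hmh : 'M[R]_d) (dT : measure_display) (T : measurableType dT)
  (P : probability T R) (Smat : forall m : nat, T -> 'M[R]_(m, n)) (delta : R)
  (k : nat) : Prop :=
  (1 <= k)%N /\
  forall (rho : R), 0 < rho -> forall m : nat, k%:R / rho <= m%:R ->
    ((1 - delta)%:E <= P [set t | Event Hmh rho (Smat m t)]%classic)%E.

(* m_delta is the critical sketch size: the infimum (= least element) of that set *)
Definition critical_sketch_size (Hmh : 'M[R]_d) (dT : measure_display)
  (T : measurableType dT) (P : probability T R)
  (Smat : forall m : nat, T -> 'M[R]_(m, n)) (delta : R) (md : nat) : Prop :=
  crit_ok Hmh P Smat delta md /\
  forall k, crit_ok Hmh P Smat delta k -> (md <= k)%N.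

End Defs.

From HB Require Import structures.
From mathcomp Require Import all_boot all_order all_algebra.
From mathcomp Require Import all_classical all_reals all_analysis.
From mathcomp Require Import lra ring.
Import Order.TTheory GRing.Theory Num.Theory.
Local Open Scope ring_scope.
Local Open Scope classical_set_scope.

Set Implicit Arguments. Unset Strict Implicit. Unset Printing Implicit Defensive.

(* On the event E^m_rho with rho >= 1 we have ||C_S - I|| <= rho, hence
   C_S <= (1 + rho) I, i.e. H_S <= (1 + rho) H in the Loewner order.  Inversion
   reverses the Loewner order (via Cauchy-Schwarz for the form H_S), so
   H^-1 <= (1 + rho) H_S^-1; evaluating both forms at grad f(x) = H (x - x* )
   gives delta_x <= (1 + rho) delta~_x.  For the probabilistic statement take
   rho = m_delta / m >= 1: then m_delta / rho = m, so the definition of m_delta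
   gives P(E^m_rho) >= 1 - delta. *)

Section QuadraticForm.
Variables (R : realType) (k : nat).
Implicit Types (u v w : 'cV[R]_k) (M N : 'M[R]_k).

Lemma qform_trmx u M v : qform u M^T v = qform v M u.
Proof.
by rewrite /qform -[in RHS](trmxK (v^T *m M *m u)) [RHS]mxE !trmx_mul !trmxK mulmxA.
Qed.

Lemma qformC u M v : M^T = M -> qform u M v = qform v M u.
Proof. by move=> sM; rewrite -qform_trmx sM. Qed.

Lemma qform_mulmx p u (X : 'M[R]_(p, k)) (M : 'M[R]_p) v :
  qform u (X^T *m M *m X) v = qform (X *m u) M (X *m v).
Proof. by rewrite /qform trmx_mul !mulmxA. Qed.

Lemma qformDl u w M v : qform (u + w) M v = qform u M v + qform w M v.
Proof. by rewrite /qform linearD !mulmxDl mxE. Qed.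

Lemma qformZl a u M v : qform (a *: u) M v = a * qform u M v.
Proof. by rewrite /qform linearZ -!scalemxAl mxE. Qed.

Lemma qformDr u M v w : qform u M (v + w) = qform u M v + qform u M w.
Proof. by rewrite /qform mulmxDr mxE. Qed.

Lemma qformZr u M a v : qform u M (a *: v) = a * qform u M v.
Proof. by rewrite /qform -scalemxAr mxE. Qed.

Lemma qformDmx u M N v : qform u (M + N) v = qform u M v + qform u N v.
Proof. by rewrite /qform mulmxDr mulmxDl mxE. Qed.

Lemma qformZmx u a M v : qform u (a *: M) v = a * qform u M v.
Proof. by rewrite /qform -scalemxAr -scalemxAl mxE. Qed.

Lemma qform_mulmxK u M : M \in unitmx ->
  qform (M *m u) (invmx M) (M *m u) = qform u M u.
Proof.
by move=> uM; rewrite -[RHS]qform_trmx /qform trmx_mul -!mulmxA (mulKmx uM).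
Qed.

Lemma real_discriminant_le (a b c : R) : 0 <= c ->
  (forall t, 0 <= a + 2 * t * b + t ^+ 2 * c) -> b ^+ 2 <= a * c.
Proof.
move=> c_ge0 nonneg; have [c0|c_neq0] := eqVneq c 0.
  subst c; have [->|b_neq0] := eqVneq b 0; first by rewrite expr0n mulr0.
  have := nonneg (- (a + 1) / (2 * b)).
  have -> : 2 * (- (a + 1) / (2 * b)) * b = - (a + 1) by field.
  rewrite !mulr0; lra.
have c_gt0 : 0 < c by rewrite lt_def c_neq0.
have := nonneg (- b / c).
have -> : a + 2 * (- b / c) * b + (- b / c) ^+ 2 * c = (a * c - b ^+ 2) / c by field.
by rewrite pmulr_lge0 ?invr_gt0 // subr_ge0.
Qed.

Lemma qform_CauchySchwarz M u v : sym_psd M ->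
  qform u M v ^+ 2 <= qform u M u * qform v M v.
Proof.
case=> sM psdM; apply: real_discriminant_le => // t.
rewrite -[X in 0 <= X](_ : qform (u + t *: v) M (u + t *: v) = _) //.
rewrite !(qformDl, qformDr, qformZl, qformZr) (qformC v u sM); ring.
Qed.

End QuadraticForm.

Section EuclideanNorm.
Variables (R : realType) (k : nat).
Implicit Types (u v : 'cV[R]_k) (M : 'M[R]_k).

Lemma qform1_sqr v : qform v 1%:M v = \sum_i v i ord0 ^+ 2.
Proof. by rewrite /qform mulmx1 mxE; apply: eq_bigr => i _; rewrite mxE expr2. Qed.

Lemma qform1_ge0 v : 0 <= qform v 1%:M v.
Proof. by rewrite qform1_sqr sumr_ge0 // => i _; rewrite sqr_ge0. Qed.

Lemma qform1_gt0 v : v != 0 -> 0 < qform v 1%:M v.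
Proof.
move=> v_neq0; rewrite lt_def qform1_ge0 andbT; apply: contraNneq v_neq0.
rewrite qform1_sqr => /psumr_eq0P vi0; apply/eqP/matrixP => i j.
by rewrite (ord1 j) mxE; apply/eqP; rewrite -sqrf_eq0 vi0 // => l _; rewrite sqr_ge0.
Qed.

Lemma sym_psd1 : sym_psd (1%:M : 'M[R]_k).
Proof. by split; [exact: trmx1 | exact: qform1_ge0]. Qed.

Lemma vnorm2E v : vnorm2 v = Num.sqrt (qform v 1%:M v).
Proof. by rewrite qform1_sqr. Qed.

Lemma vnorm2_ge0 v : 0 <= vnorm2 v.
Proof. exact: sqrtr_ge0. Qed.

Lemma vnorm2_sqr v : vnorm2 v ^+ 2 = qform v 1%:M v.
Proof. by rewrite vnorm2E sqr_sqrtr // qform1_ge0. Qed.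

Lemma vnorm2Z a v : vnorm2 (a *: v) = `|a| * vnorm2 v.
Proof.
by rewrite !vnorm2E qformZl qformZr mulrA -expr2 sqrtrM ?sqr_ge0 // sqrtr_sqr.
Qed.

Lemma qform1_le_vnorm2 u v : qform u 1%:M v <= vnorm2 u * vnorm2 v.
Proof.
rewrite !vnorm2E -sqrtrM ?qform1_ge0 //; apply: le_trans (ler_norm _) _.
by rewrite -sqrtr_sqr ler_wsqrtr // (qform_CauchySchwarz _ _ sym_psd1).
Qed.

Lemma spec_norm_has_ubound M :
  has_ubound [set vnorm2 (M *m v) | v in [set v : 'cV[R]_k | vnorm2 v = 1]].
Proof.
exists (Num.sqrt (\sum_i qform (row i M)^T 1%:M (row i M)^T)) => _ [v v_unit <-].
rewrite /vnorm2 ler_wsqrtr // ler_sum // => i _.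
have -> : (M *m v) i ord0 = qform (row i M)^T 1%:M v.
  by rewrite /qform trmxK mulmx1 -row_mul [RHS]mxE.
apply: le_trans (qform_CauchySchwarz _ _ sym_psd1) _.
by rewrite -(vnorm2_sqr v) v_unit expr1n mulr1.
Qed.

Lemma vnorm2_mulmx_le M v : vnorm2 (M *m v) <= spec_norm M * vnorm2 v.
Proof.
have [v0|v_neq0] := eqVneq v 0.
  by rewrite v0 mulmx0 -(scale0r 0) !vnorm2Z normr0 !mul0r mulr0.
have nv_gt0 : 0 < vnorm2 v by rewrite vnorm2E sqrtr_gt0 qform1_gt0.
pose v1 := (vnorm2 v)^-1 *: v.
have v1_unit : vnorm2 v1 = 1.
  by rewrite vnorm2Z ger0_norm ?invr_ge0 ?vnorm2_ge0 // mulVf ?gt_eqF.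
have : vnorm2 (M *m v1) <= spec_norm M.
  by apply: (ub_le_sup (spec_norm_has_ubound M)); exists v1.
rewrite -scalemxAr vnorm2Z ger0_norm ?invr_ge0 ?vnorm2_ge0 //.
by rewrite -ler_pdivlMl ?invr_gt0 // invrK mulrC.
Qed.

Lemma qform_le_spec_norm M v :
  qform v M v <= (1 + spec_norm (M - 1%:M)) * qform v 1%:M v.
Proof.
have -> : qform v M v = qform v 1%:M (v + (M - 1%:M) *m v).
  by rewrite mulmxBl mul1mx addrC subrK /qform mulmx1 mulmxA.
rewrite qformDr mulrDl mul1r lerD2l -vnorm2_sqr expr2 mulrA.
apply: le_trans (qform1_le_vnorm2 _ _) _.
by rewrite mulrC ler_wpM2r ?vnorm2_ge0 // vnorm2_mulmx_le.
Qed.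

End EuclideanNorm.

Section Loewner.
Variables (R : realType) (k : nat).
Implicit Types (u v : 'cV[R]_k) (M N : 'M[R]_k).

Lemma pd_unitmx M :
  (forall v, v != 0 -> 0 < qform v M v) -> M \in unitmx.
Proof.
move=> pdM; rewrite -row_free_unit -kermx_eq0; apply: contraT => kerM_neq0.
pose w := nz_row (kermx M).
have wM0 : w *m M = 0 by apply/sub_kermxP; exact: nz_row_sub.
have := pdM w^T; rewrite trmx_eq0 nz_row_eq0 => /(_ kerM_neq0).
by rewrite /qform trmxK wM0 mul0mx mxE ltxx.
Qed.

Lemma qform_invmx_mulmx u M : M \in unitmx ->
  qform (invmx M *m u) M (invmx M *m u) = qform u (invmx M) u.
Proof. by move=> uM; rewrite -{2}[M]invmxK qform_mulmxK ?unitmx_inv. Qed.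

Lemma loewner_le_invmx M N c : M \in unitmx -> N \in unitmx -> sym_psd N ->
  0 <= c -> loewner_le N (c *: M) -> loewner_le (invmx M) (c *: invmx N).
Proof.
move=> uM uN psdN c_ge0 NleM g; rewrite qformZmx.
(* Cauchy-Schwarz for the form N at M^-1 g and N^-1 g gives q^2 <= (c q) r. *)
set q := qform g (invmx M) g; set r := qform g (invmx N) g.
pose a := invmx M *m g; pose s := invmx N *m g.
have aNs : qform a N s = q.
  by rewrite /qform -mulmxA (mulKVmx uN) /a trmx_mul -[q]qform_trmx.
have aNa : qform a N a <= c * q.
  by rewrite -[q](qform_invmx_mulmx g uM) -qformZmx NleM.
have sNs : qform s N s = r by rewrite qform_invmx_mulmx.
have r_ge0 : 0 <= r by rewrite -sNs; case: psdN.
have := qform_CauchySchwarz a s psdN; rewrite aNs sNs => q2_le.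
have {}q2_le : q ^+ 2 <= c * q * r by apply: le_trans q2_le _; rewrite ler_wpM2r.
have [q_le0|q_gt0] := lerP q 0; first by apply: le_trans q_le0 _; rewrite mulr_ge0.
by rewrite -(ler_pM2l q_gt0) -expr2 mulrCA mulrA.
Qed.

End Loewner.

Section Sketch.
Variables (R : realType) (n d : nat) (A : 'M[R]_(n, d)) (b : 'cV[R]_d).
Variables (Lam : 'M[R]_d) (nu : R).
Hypotheses (Lam_diag : is_diag_mx Lam) (one_le_Lam : loewner_le 1%:M Lam).
Hypothesis nu_gt0 : 0 < nu.

Let H := Hmat A Lam nu.

Lemma Hmat_HS : H = HS A Lam nu (1%:M : 'M[R]_n).
Proof. by rewrite /H /Hmat /HS trmx1 !mulmx1. Qed.

Lemma HS_sym m (S : 'M[R]_(m, n)) : (HS A Lam nu S)^T = HS A Lam nu S.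
Proof.
have Lam_sym : Lam^T = Lam by case/diag_mxP: Lam_diag => D ->; rewrite tr_diag_mx.
by rewrite /HS linearD linearZ /= Lam_sym !trmx_mul !trmxK !mulmxA.
Qed.

Lemma HS_lower m (S : 'M[R]_(m, n)) v :
  nu ^+ 2 * qform v 1%:M v <= qform v (HS A Lam nu S) v.
Proof.
rewrite /HS qformDmx qformZmx -[X in X <= _]add0r lerD ?ler_wpM2l ?sqr_ge0 //.
have -> : A^T *m S^T *m S *m A = (S *m A)^T *m 1%:M *m (S *m A).
  by rewrite mulmx1 trmx_mul !mulmxA.
by rewrite qform_mulmx qform1_ge0.
Qed.

Lemma HS_sym_psd m (S : 'M[R]_(m, n)) : sym_psd (HS A Lam nu S).
Proof.
split=> [|v]; first exact: HS_sym.
by apply: le_trans (HS_lower S v); rewrite mulr_ge0 ?sqr_ge0 ?qform1_ge0.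
Qed.

Lemma HS_unitmx m (S : 'M[R]_(m, n)) : HS A Lam nu S \in unitmx.
Proof.
apply: pd_unitmx => v v_neq0; apply: lt_le_trans (HS_lower S v).
by rewrite mulr_gt0 ?exprn_gt0 ?qform1_gt0.
Qed.

Lemma Hmat_unitmx : H \in unitmx.
Proof. by rewrite Hmat_HS HS_unitmx. Qed.

Lemma gradfE x : gradf A b Lam nu x = H *m (x - xstar A b Lam nu).
Proof. by rewrite /xstar mulmxBr mulKVmx ?Hmat_unitmx. Qed.

Lemma delta_xE x : delta_x A b Lam nu x =
  2^-1 * qform (gradf A b Lam nu x) (invmx H) (gradf A b Lam nu x).
Proof. by rewrite gradfE qform_mulmxK ?Hmat_unitmx. Qed.

Variable Hmh : 'M[R]_d.
Hypotheses (Hmh_sym : Hmh^T = Hmh) (Hmh_sqr : Hmh *m Hmh = invmx H).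

Lemma Hmh_unitmx : Hmh \in unitmx.
Proof.
have : Hmh *m Hmh \in unitmx by rewrite Hmh_sqr unitmx_inv Hmat_unitmx.
by rewrite unitmx_mul => /andP[].
Qed.

Lemma Hmh_Hmat_Hmh : Hmh *m H *m Hmh = 1%:M.
Proof.
rewrite -{1}(mulKmx Hmh_unitmx Hmh) Hmh_sqr -(mulmxA (invmx Hmh)).
by rewrite (mulVmx Hmat_unitmx) mulmx1 (mulVmx Hmh_unitmx).
Qed.

Lemma Event_HS_le_Hmat rho m (S : 'M[R]_(m, n)) : 1 <= rho ->
  Event A Lam nu Hmh rho S -> loewner_le (HS A Lam nu S) ((1 + rho) *: H).
Proof.
move=> rho_ge1; rewrite /Event max_r; last first.
  have rho_ge0 : 0 <= rho by lra.
  by rewrite -{2}(sqr_sqrtr rho_ge0) expr2 ler_peMl ?sqrtr_ge0 // -sqrtr1 ler_wsqrtr.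
move=> spec_le v; rewrite qformZmx.
have [w ->] : exists w, v = Hmh *m w.
  by exists (invmx Hmh *m v); rewrite mulKVmx ?Hmh_unitmx.
rewrite -!qform_mulmx Hmh_sym Hmh_Hmat_Hmh.
apply: le_trans (qform_le_spec_norm _ _) _.
by rewrite ler_wpM2r ?qform1_ge0 // lerD2l.
Qed.

Lemma delta_x_le_delta_tilde rho m (S : 'M[R]_(m, n)) x : 1 <= rho ->
  Event A Lam nu Hmh rho S ->
  delta_x A b Lam nu x <= (1 + rho) * delta_tilde A b Lam nu S x.
Proof.
move=> rho_ge1 ES; rewrite delta_xE /delta_tilde mulrCA ler_wpM2l // -qformZmx.
apply: loewner_le_invmx; rewrite ?Hmat_unitmx ?HS_unitmx //.
- exact: HS_sym_psd.
- lra.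
- exact: Event_HS_le_Hmat.
Qed.

End Sketch.

Lemma critical_sketch_size_Event (R : realType) (n d : nat) (A : 'M[R]_(n, d))
    (Lam Hmh : 'M[R]_d) (nu : R) (dT : measure_display) (T : measurableType dT)
    (P : probability T R) (Smat : forall m : nat, T -> 'M[R]_(m, n)) (delta : R)
    (md m : nat) :
  critical_sketch_size A Lam nu Hmh P Smat delta md -> (0 < m)%N ->
  ((1 - delta)%:E <= P [set t | Event A Lam nu Hmh (md%:R / m%:R) (Smat m t)])%E.
Proof.
case=> -[md_gt0 md_ok] _ m_gt0; apply: md_ok; first by rewrite divr_gt0 ?ltr0n.
by rewrite invf_div mulrCA divff ?mulr1 // pnatr_eq0 -lt0n.
Qed.

Theorem lemma2p2 (R : realType) (n d : nat) (A : 'M[R]_(n, d)) (b : 'cV[R]_d)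
  (Lam : 'M[R]_d) (nu : R)
  (hnd : (d <= n)%N) (hLdiag : is_diag_mx Lam) (hLI : loewner_le 1%:M Lam)
  (hnu : 0 < nu)
  (Hmh : 'M[R]_d) (hHmh_psd : sym_psd Hmh)
  (hHmh_sq : Hmh *m Hmh = invmx (Hmat A Lam nu)) :
  (forall (rho : R) (m : nat) (S : 'M[R]_(m, n)),
      1 <= rho -> Event A Lam nu Hmh rho S ->
      forall x : 'cV[R]_d,
        delta_x A b Lam nu x <= (1 + rho) * delta_tilde A b Lam nu S x)
  /\
  (forall (dT : measure_display) (T : measurableType dT) (P : probability T R)
      (Smat : forall m : nat, T -> 'M[R]_(m, n)) (delta : R) (md m : nat),
      (forall (rho : R) (k : nat),
          measurable [set t | Event A Lam nu Hmh rho (Smat k t)]) ->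
      0 < delta < 1 ->
      critical_sketch_size A Lam nu Hmh P Smat delta md ->
      (1 <= m)%N -> (m <= md)%N ->
      exists F : set T, [/\ measurable F, ((1 - delta)%:E <= P F)%E &
        forall t, F t -> forall x : 'cV[R]_d,
          delta_x A b Lam nu x
            <= delta_tilde A b Lam nu (Smat m t) x * (1 + md%:R / m%:R)]).
Proof.
have Hmh_sym : Hmh^T = Hmh by case: hHmh_psd.
have sketch_bound := delta_x_le_delta_tilde b hLdiag hLI hnu Hmh_sym hHmh_sq.
split=> [rho m S rho_ge1 ES x | dT T P Smat delta md m Emeas _ md_crit m_ge1 m_le_md].
  exact: sketch_bound.
exists [set t | Event A Lam nu Hmh (md%:R / m%:R) (Smat m t)]; split.
- exact: Emeas.
- exact: critical_sketch_size_Event.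
- move=> t Et x; rewrite mulrC; apply: sketch_bound Et.
  by rewrite ler_pdivlMr ?mul1r ?ler_nat ?ltr0n.
Qed.
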